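(* Let $R$ be a ring with unity, $N\geq 2$, and let $C$ be an $N$-complex of $R$-modules. Then $C$ is contractible if and only if $C$ is isomorphic to a direct sum (equivalently, product) of $N$-disks $\bigoplus_{n\in\mathbb{Z}} D^N_n(M_n)=\prod_{n\in\mathbb{Z}} D^N_n(M_n)$ for some family of $R$-modules $\{M_n\}_{n\in\mathbb{Z}}$. Moreover, in this case one can take $M_n={}_1Z_{n-(N-1)}(C)$.
   Context: An $N$-complex $X$ is a sequence of $R$-modules and maps $d_n:X_n\to X_{n-1}$ with any composite of $N$ consecutive maps equal to $0$. Chain maps are degreewise maps commuting with differentials. Two chain maps $f,g:X\to Y$ are chain homotopic if there are maps $s_n:X_n\to Y_{n+N-1}$ with $g_n-f_n=\sum_{i=0}^{N-1} d^{N-1-i}s_{n-i}d^i$ for all $n$; $C$ is contractible if $1_C$ is chain homotopic to $0$. For an $R$-module $M$, the disk $D^N_n(M)$ is the $N$-complex equal to $M$ in degrees $n,n-1,\dots,n-(N-1)$, joined by identity maps, and $0$ elsewhere. For an $N$-complex $X$, ${}_1Z_n(X)=\ker(d_n:X_n\to X_{n-1})$. *)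

From HB Require Import structures.
From mathcomp Require Import all_boot all_order all_algebra.
From mathcomp Require Import boolp.

Set Implicit Arguments.
Unset Strict Implicit.
Unset Printing Implicit Defensive.

Import Order.TTheory GRing.Theory Num.Theory.
Local Open Scope ring_scope.

Section DProd.
Variables (R : pzRingType) (I : Type) (F : I -> lmodType R).

Definition dprod := forall i, F i.

HB.instance Definition _ := gen_eqMixin dprod.
HB.instance Definition _ := gen_choiceMixin dprod.

Definition dprod_zero : dprod := fun i => 0.
Definition dprod_opp (x : dprod) : dprod := fun i => - x i.
Definition dprod_add (x y : dprod) : dprod := fun i => x i + y i.
Definition dprod_scale (a : R) (x : dprod) : dprod := fun i => a *: x i.

Lemma dprod_addA : associative dprod_add.
Proof. by move=> x y z; apply: functional_extensionality_dep => i; rewrite /dprod_add addrA. Qed.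
Lemma dprod_addC : commutative dprod_add.
Proof. by move=> x y; apply: functional_extensionality_dep => i; rewrite /dprod_add addrC. Qed.
Lemma dprod_add0 : left_id dprod_zero dprod_add.
Proof. by move=> x; apply: functional_extensionality_dep => i; rewrite /dprod_add add0r. Qed.
Lemma dprod_addN : left_inverse dprod_zero dprod_opp dprod_add.
Proof. by move=> x; apply: functional_extensionality_dep => i; rewrite /dprod_add /dprod_opp addNr. Qed.

HB.instance Definition _ := GRing.isZmodule.Build dprod
  dprod_addA dprod_addC dprod_add0 dprod_addN.

Lemma dprod_scaleA a b (v : dprod) :
  dprod_scale a (dprod_scale b v) = dprod_scale (a * b) v.
Proof. by apply: functional_extensionality_dep => i; rewrite /dprod_scale scalerA. Qed.
Lemma dprod_scale1 : left_id 1 dprod_scale.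
Proof. by move=> x; apply: functional_extensionality_dep => i; rewrite /dprod_scale scale1r. Qed.
Lemma dprod_scaleDr : right_distributive dprod_scale +%R.
Proof. by move=> a x y; apply: functional_extensionality_dep => i; rewrite /dprod_scale scalerDr. Qed.
Lemma dprod_scaleDl (v : dprod) :
  {morph dprod_scale^~ v : a b / a + b}.
Proof. by move=> a b; apply: functional_extensionality_dep => i; rewrite /dprod_scale scalerDl. Qed.

HB.instance Definition _ := GRing.Zmodule_isLmodule.Build R dprod
  dprod_scaleA dprod_scale1 dprod_scaleDr dprod_scaleDl.

End DProd.

Record precomplex (R : pzRingType) := PreComplex {
  obj :> int -> lmodType R;
  dif : forall n : int, {linear obj n -> obj (n - 1)}
}.

Section Complexes.
Variable R : pzRingType.

(* transport an element living in degree m (packed) to degree n;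
   it is the identity (via the equality m = n) when m = n, and 0 otherwise *)
Definition at_deg (X : int -> lmodType R) (n : int) (p : {m : int & X m}) : X n :=
  match projT1 p =P n with
  | ReflectT e => eq_rect (projT1 p) (fun m => X m) (projT2 p) n e
  | ReflectF _ => 0
  end.

Definition difT (X : precomplex R) (p : {m : int & X m}) : {m : int & X m} :=
  existT (fun m => X m) (projT1 p - 1) (@dif R X (projT1 p) (projT2 p)).

Definition dpow (X : precomplex R) (k : nat) (n : int) (x : X n) : X (n - k%:Z) :=
  at_deg (n - k%:Z) (iter k (@difT X) (existT (fun m => X m) n x)).

Definition is_Ncomplex (N : nat) (X : precomplex R) : Prop :=
  forall (n : int) (x : X n), @dpow X N n x = 0.

Definition is_chain_map (X Y : precomplex R) (f : forall n, X n -> Y n) : Prop :=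
  (forall n, linear (f n)) /\
  (forall n (x : X n), @dif R Y n (f n x) = f (n - 1) (@dif R X n x)).

Definition chain_homotopic (N : nat) (X Y : precomplex R)
    (f g : forall n, X n -> Y n) : Prop :=
  exists s : forall n : int, X n -> Y (n + (N.-1)%:Z),
    (forall n, linear (s n)) /\
    forall (n : int) (x : X n),
      g n x - f n x =
      \sum_(i < N)
        at_deg n (existT (fun m => Y m) _
          (@dpow Y (N.-1 - i) _ (s (n - i%:Z) (@dpow X i n x)))).

Definition contractible (N : nat) (C : precomplex R) : Prop :=
  chain_homotopic N (fun n (_ : C n) => 0) (fun n (x : C n) => x).

Definition cx_iso (X Y : precomplex R) : Prop :=
  exists (f : forall n, X n -> Y n) (g : forall n, Y n -> X n),
    [/\ is_chain_map f, is_chain_map g,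
        (forall n (x : X n), g n (f n x) = x) &
        (forall n (y : Y n), f n (g n y) = y)].

(* D^N_n(M) is M in degrees k with n-(N-1) <= k <= n and 0 elsewhere;
   we model its degree-k component as the module of functions
   (in_disk N n k -> M), which is M when in_disk N n k holds and 0 otherwise. *)
Definition in_disk (N : nat) (n k : int) : bool :=
  (n - (N.-1)%:Z <= k) && (k <= n).

Definition disk_obj (N : nat) (M : lmodType R) (n k : int) : lmodType R :=
  dprod (fun _ : in_disk N n k => M).

Definition disk_dif (N : nat) (M : lmodType R) (n k : int)
    (x : disk_obj N M n k) : disk_obj N M n (k - 1) :=
  fun _ =>
    match boolP (in_disk N n k) with
    | AltTrue e => x e
    | AltFalse _ => 0
    end.

Lemma disk_dif_linear N M n k : linear (@disk_dif N M n k).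
Proof.
move=> a u v; apply: functional_extensionality_dep => h.
rewrite /disk_dif /=; destruct (boolP (in_disk N n k)); first by [].
by rewrite /= /dprod_add /dprod_scale scaler0 addr0.
Qed.

HB.instance Definition _ N M n k :=
  GRing.isLinear.Build R _ _ _ (@disk_dif N M n k) (@disk_dif_linear N M n k).

Definition disk (N : nat) (M : lmodType R) (n : int) : precomplex R :=
  @PreComplex R (disk_obj N M n) (@disk_dif N M n).

(* prod_{n in Z} D^N_n(M_n), which equals the direct sum since in each
   degree only finitely many (N) factors are nonzero *)
Definition disk_sum_obj (N : nat) (M : int -> lmodType R) (k : int) :=
  dprod (fun n : int => disk_obj N (M n) n k).

Definition disk_sum_dif (N : nat) (M : int -> lmodType R) (k : int)
    (x : disk_sum_obj N M k) : disk_sum_obj N M (k - 1) :=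
  fun n => @disk_dif N (M n) n k (x n).

Lemma disk_sum_dif_linear N M k : linear (@disk_sum_dif N M k).
Proof.
move=> a u v; apply: functional_extensionality_dep => n.
exact: (@disk_dif_linear N (M n) n k a (u n) (v n)).
Qed.

HB.instance Definition _ N M k :=
  GRing.isLinear.Build R _ _ _ (@disk_sum_dif N M k) (@disk_sum_dif_linear N M k).

Definition disk_sum (N : nat) (M : int -> lmodType R) : precomplex R :=
  @PreComplex R (disk_sum_obj N M) (@disk_sum_dif N M).

Section Ker.
Variables (C : precomplex R) (n : int).

Definition kerd : {pred C n} := fun x => @dif R C n x == 0.

Lemma kerd_closed : subsemimod_closed kerd.
Proof.
split; first split.
- by rewrite unfold_in /kerd linear0.
- by move=> x y; rewrite !unfold_in /kerd linearD => /eqP -> /eqP ->; rewrite addr0.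
- by move=> a x; rewrite !unfold_in /kerd => /eqP H; rewrite linearZ /= H scaler0.
Qed.

HB.instance Definition _ := GRing.isSubmodClosed.Build R (C n) kerd kerd_closed.

Record Z1 := MkZ1 { z1val : C n; _ : z1val \in kerd }.
HB.instance Definition _ := [isSub for z1val].
HB.instance Definition _ := [Equality of Z1 by <:].
HB.instance Definition _ := [Choice of Z1 by <:].
HB.instance Definition _ := [SubChoice_isSubLmodule of Z1 by <:].
End Ker.

End Complexes.

(* A contraction s of an N-complex C satisfies d^(N-1) s z = z for every cycle z.
   Sending a cycle z of Z_(n-(N-1))(C), placed in the disk D^N_n, to d^(n-k) s z in
   degree k therefore defines a chain map from the sum of disks onto C. It is injective
   by a triangular argument (d^(N-1-b) kills all summands but the b-th, which it turns
   back into z) and surjective by induction on the least p with d^p x = 0, peeling off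
   d^(N-1-p) s d^p x. Conversely a sum of disks is contractible (the homotopy moves the
   bottom of each disk to its top) and contractibility transfers along isomorphisms. *)

From HB Require Import structures.
From mathcomp Require Import all_boot all_order all_algebra.
From mathcomp Require Import boolp zify.

Set Implicit Arguments.
Unset Strict Implicit.
Unset Printing Implicit Defensive.

Import GRing.Theory.
Local Open Scope ring_scope.

Section LinearPred.
Variables (R : pzRingType) (U V : lmodType R) (f : U -> V).
Hypothesis f_linear : linear f.

HB.instance Definition _ := GRing.isLinear.Build R U V _ f f_linear.

Lemma linear_prop0 : f 0 = 0.
Proof. exact: linear0. Qed.

Lemma linear_prop_sum (I : Type) (r : seq I) (P : pred I) (F : I -> U) :
  f (\sum_(i <- r | P i) F i) = \sum_(i <- r | P i) f (F i).
Proof. exact: linear_sum. Qed.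

End LinearPred.

(* Elements of a graded module are handled as pairs (degree, element), so that
   differentials and homotopies compose without casts along degree identities such as
   n - i + (N - 1) - (N - 1 - i) = n; at_deg reads a pair back in a given degree. *)
Section Transport.
Variables (R : pzRingType) (X : int -> lmodType R).

Lemma at_degE n (x : X n) : at_deg n (existT X n x) = x.
Proof. by rewrite /at_deg /=; case: eqP => // e; rewrite (eq_irrelevance e erefl). Qed.

Lemma at_deg_neq n m (x : X m) : m != n -> at_deg n (existT X m x) = 0.
Proof. by rewrite /at_deg /= => /eqP mn; case: eqP. Qed.

Lemma at_degK n (q : {m : int & X m}) : projT1 q = n -> existT X n (at_deg n q) = q.
Proof. by case: q => m x /= <-; rewrite at_degE. Qed.

Lemma at_deg_existT_linear n m : linear (fun x : X m => at_deg n (existT X m x)).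
Proof.
move=> a u v; have [<-|mn] := eqVneq m n; first by rewrite !at_degE.
by rewrite !at_deg_neq // scaler0 addr0.
Qed.

Lemma at_deg_existT0 n m : at_deg n (existT X m 0) = 0.
Proof.
by have [<-|mn] := eqVneq m n; [rewrite at_degE | rewrite at_deg_neq].
Qed.

Definition zeroT (q : {m : int & X m}) := projT2 q = 0.

Lemma at_deg_zeroT n q : zeroT q -> at_deg n q = 0.
Proof. by case: q => m x; rewrite /zeroT /= => ->; rewrite at_deg_existT0. Qed.

End Transport.

Arguments zeroT {R X}.

Section Complex.
Variables (R : pzRingType) (X : precomplex R).
Local Notation D := (@difT R X).

Lemma projT1_iter_difT k q : projT1 (iter k D q) = projT1 q - k%:Z.
Proof. by elim: k => [|k IH] /=; [rewrite subr0 | rewrite IH; lia]. Qed.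

Lemma iter_difT_existT k n (x : X n) :
  iter k D (existT _ n x) = existT _ (n - k%:Z) (dpow k x).
Proof. by rewrite at_degK // projT1_iter_difT. Qed.

Lemma dif_at_deg k q : dif X k (at_deg k q) = at_deg (k - 1) (D q).
Proof.
case: q => m x; have [<-|mk] := eqVneq m k; first by rewrite /= !at_degE.
by rewrite /= !at_deg_neq ?linear0 //; apply: contra mk => /eqP /= e; apply/eqP; lia.
Qed.

Lemma dpowS k n (x : X n) :
  dpow k.+1 x = at_deg (n - k.+1%:Z) (existT (fun m => X m) _ (dif X _ (dpow k x))).
Proof. by rewrite /dpow /= -/(dpow k x) iter_difT_existT. Qed.

Lemma dpow_linear k n : linear (@dpow R X k n).
Proof.
elim: k => [|k IH] a u v; first exact: at_deg_existT_linear.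
by rewrite !dpowS IH linearP at_deg_existT_linear.
Qed.

End Complex.

HB.instance Definition _ (R : pzRingType) (X : precomplex R) (k : nat) (n : int) :=
  GRing.isLinear.Build R _ _ _ (@dpow R X k n) (@dpow_linear R X k n).

Section DifferentialIterates.
Variables (R : pzRingType) (X : precomplex R).
Local Notation D := (@difT R X).

Lemma iter_difT_linear m a k :
  linear (fun x : X k => at_deg m (iter a D (existT _ k x))).
Proof.
by move=> b u v; rewrite !iter_difT_existT linearP at_deg_existT_linear.
Qed.

Lemma zeroT_difT q : zeroT q -> zeroT (D q).
Proof. by case: q => m x; rewrite /zeroT /= => ->; rewrite linear0. Qed.

Lemma zeroT_iter k q : zeroT q -> zeroT (iter k D q).
Proof. by move=> q0; elim: k => //= k; apply: zeroT_difT. Qed.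

Lemma Ncomplex_iter N a q : is_Ncomplex N X -> (N <= a)%N -> zeroT (iter a D q).
Proof.
move=> XN aN; rewrite -(subnK aN) iterD; apply: zeroT_iter.
by case: q => m x; rewrite iter_difT_existT; apply: XN.
Qed.

End DifferentialIterates.

Section Homotopy.
Variables (R : pzRingType) (N : nat) (X Y : precomplex R).
Variable s : forall n, X n -> Y (n + (N.-1)%:Z).

Definition shiftT (q : {m : int & X m}) : {m : int & Y m} :=
  existT _ (projT1 q + (N.-1)%:Z) (s (projT2 q)).

Lemma projT1_shiftT q : projT1 (shiftT q) = projT1 q + (N.-1)%:Z.
Proof. by []. Qed.

Lemma homotopy_termE n (x : X n) i :
  at_deg n (existT (fun m => Y m) _ (dpow (N.-1 - i) (s (dpow i x)))) =
  at_deg n (iter (N.-1 - i) (@difT _ Y) (shiftT (iter i (@difT _ X) (existT _ n x)))).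
Proof. by rewrite iter_difT_existT /shiftT /= iter_difT_existT. Qed.

End Homotopy.

Arguments shiftT {R N X Y} s q.

Definition contraction (R : pzRingType) (N : nat) (X : precomplex R)
    (s : forall n, X n -> X (n + (N.-1)%:Z)) :=
  forall n (x : X n), x = \sum_(i < N)
    at_deg n (iter (N.-1 - i) (@difT _ X) (shiftT s (iter i (@difT _ X) (existT _ n x)))).

Lemma contractibleP (R : pzRingType) (N : nat) (X : precomplex R) :
  contractible N X <->
  exists2 s : forall n, X n -> X (n + (N.-1)%:Z),
    (forall n, linear (s n)) & contraction s.
Proof.
split=> [[s [slin hs]]|[s slin hs]].
  exists s => // n x.
  by rewrite -[x in LHS]subr0 hs; apply: eq_bigr => i _; rewrite homotopy_termE.
exists s; split=> // n x.
by rewrite subr0 {1}(hs n x); apply: eq_bigr => i _; rewrite homotopy_termE.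
Qed.

Section ChainMap.
Variables (R : pzRingType) (X Y : precomplex R) (f : forall n, X n -> Y n).
Hypothesis fchain : is_chain_map f.

Definition mapT (q : {m : int & X m}) : {m : int & Y m} :=
  existT _ (projT1 q) (f (projT2 q)).

Lemma iter_difT_mapT k q : iter k (@difT _ Y) (mapT q) = mapT (iter k (@difT _ X) q).
Proof. by elim: k => //= k ->; rewrite /mapT /difT /= fchain.2. Qed.

Lemma at_deg_mapT n q : at_deg n (mapT q) = f (at_deg n q).
Proof.
case: q => m x; have [<-|mn] := eqVneq m n; first by rewrite !at_degE.
by rewrite !at_deg_neq // (linear_prop0 (fchain.1 n)).
Qed.

End ChainMap.

Section Retract.
Variables (R : pzRingType) (N : nat) (X Y : precomplex R).
Variables (f : forall n, X n -> Y n) (g : forall n, Y n -> X n).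
Hypotheses (fchain : is_chain_map f) (gchain : is_chain_map g).
Hypothesis gK : forall n (x : X n), g (f x) = x.

Lemma contraction_retract (s : forall n, Y n -> Y (n + (N.-1)%:Z)) :
  contraction s -> contraction (fun n x => g (s n (f x))).
Proof.
move=> hs n x; rewrite -{1}(gK x) {1}(hs n (f x)) (linear_prop_sum (gchain.1 n)).
apply: eq_bigr => i _.
have -> : shiftT (fun n x => g (s n (f x))) = mapT g \o shiftT s \o mapT f by [].
by rewrite /= -(iter_difT_mapT fchain) (iter_difT_mapT gchain) (at_deg_mapT gchain).
Qed.

End Retract.

Lemma contractible_iso (R : pzRingType) (N : nat) (X Y : precomplex R) :
  cx_iso X Y -> contractible N Y -> contractible N X.
Proof.
case=> f [g [fchain gchain gK _]] /contractibleP [s slin hs].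
apply/contractibleP; exists (fun n x => g _ (s n (f n x))).
  by move=> n a u v; rewrite fchain.1 slin gchain.1.
exact: (contraction_retract fchain gchain).
Qed.

Lemma cx_iso_of_bijective (R : pzRingType) (X Y : precomplex R)
    (g : forall n, Y n -> X n) :
  is_chain_map g -> (forall n (y : Y n), g n y = 0 -> y = 0) ->
  (forall n (x : X n), exists y, g n y = x) -> cx_iso X Y.
Proof.
move=> gchain gker gsurj.
pose f n x := proj1_sig (cid (gsurj n x)).
have fK n (x : X n) : g n (f n x) = x by rewrite /f; case: cid.
have gK n : cancel (g n) (f n).
  move=> y; apply/eqP; rewrite -subr_eq0; apply/eqP; apply: gker.
  by rewrite (zmod_morphism_linear (gchain.1 n)) fK subrr.
exists f, g; split=> //; split=> [n a u v|n x]; apply: (can_inj (gK _)).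
  by rewrite gchain.1 !fK.
by rewrite -gchain.2 !fK.
Qed.

Section DiskValue.
Variables (R : pzRingType) (N : nat) (M : lmodType R) (n : int).

Definition disk_val k (x : disk_obj N M n k) : M :=
  match boolP (in_disk N n k) with AltTrue e => x e | AltFalse _ => 0 end.

Lemma disk_valE k (x : disk_obj N M n k) (e : in_disk N n k) : disk_val x = x e.
Proof.
rewrite /disk_val; destruct (boolP (in_disk N n k)) as [e'|ne]; last by rewrite e in ne.
by rewrite (bool_irrelevance e' e).
Qed.

Lemma disk_val_out k (x : disk_obj N M n k) : ~~ in_disk N n k -> disk_val x = 0.
Proof.
by rewrite /disk_val; destruct (boolP (in_disk N n k)) as [e|] => //; rewrite e.
Qed.

Lemma disk_val_const k (c : M) :
  disk_val (fun _ : in_disk N n k => c) = if in_disk N n k then c else 0.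
Proof. by rewrite /disk_val; destruct (boolP (in_disk N n k)). Qed.

Lemma disk_val_dif k (x : disk_obj N M n k) :
  disk_val (disk_dif x) = if in_disk N n (k - 1) then disk_val x else 0.
Proof. exact: disk_val_const. Qed.

Lemma disk_val_inj k : injective (@disk_val k).
Proof.
move=> x y xy; apply: functional_extensionality_dep => e.
by rewrite -(disk_valE x e) -(disk_valE y e).
Qed.

Lemma disk_val_linear k : linear (@disk_val k).
Proof.
move=> a u v; rewrite /disk_val; destruct (boolP (in_disk N n k)) => //.
by rewrite scaler0 addr0.
Qed.

End DiskValue.

HB.instance Definition _ (R : pzRingType) (N : nat) (M : lmodType R) (n k : int) :=
  GRing.isLinear.Build R _ _ _ (@disk_val R N M n k) (@disk_val_linear R N M n k).

Section DprodApply.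
Variables (R : pzRingType) (I : Type) (F : I -> lmodType R).

Lemma dprodD (u v : dprod F) i : (u + v) i = u i + v i.
Proof. by []. Qed.

Lemma dprodZ a (u : dprod F) i : (a *: u) i = a *: u i.
Proof. by []. Qed.

Lemma dprod_sum_apply (T : Type) (r : seq T) (P : pred T) (G : T -> dprod F) i :
  (\sum_(t <- r | P t) G t) i = \sum_(t <- r | P t) G t i.
Proof.
exact: (@big_morph _ _ (fun x : dprod F => x i) 0 +%R 0 +%R (fun _ _ => erefl)).
Qed.

End DprodApply.

Section DiskSumContractible.
Variables (R : pzRingType) (n1 : nat) (M : int -> lmodType R).
Local Notation N := n1.+1.
Local Notation Y := (disk_sum N M).
Local Notation D := (@difT R Y).

(* Moves the bottom degree k of the disk D^N_(k+N-1) to its top. *)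
Definition disk_sum_shift k (y : disk_sum_obj N M k) : disk_sum_obj N M (k + (N.-1)%:Z) :=
  fun n _ => if n == k + n1%:Z then disk_val (y n) else 0.

Lemma disk_sum_shift_linear k : linear (@disk_sum_shift k).
Proof.
move=> a u v; apply: functional_extensionality_dep => n.
apply: functional_extensionality_dep => e; rewrite !dprodD !dprodZ /disk_sum_shift.
by case: eqP => _; [rewrite linearP | rewrite scaler0 addr0].
Qed.

Local Notation S := (@shiftT R N Y Y disk_sum_shift).

Definition disk_valT (q : {m : int & Y m}) n : M n := disk_val (projT2 q n).

Lemma disk_valT_at_deg k q n :
  disk_val ((at_deg k q : disk_sum_obj N M k) n) =
  if projT1 q == k then disk_valT q n else 0.
Proof.
case: q => m y; have [<-|mk] := eqVneq m k; first by rewrite at_degE.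
by rewrite at_deg_neq // linear0.
Qed.

Lemma disk_valT_out q n : ~~ in_disk N n (projT1 q) -> disk_valT q n = 0.
Proof. by case: q => m y /= h; rewrite /disk_valT disk_val_out. Qed.

Lemma disk_valT_difT q n :
  disk_valT (D q) n = if in_disk N n (projT1 q - 1) then disk_valT q n else 0.
Proof. exact: disk_val_dif. Qed.

Lemma disk_valT_iter i q n :
  disk_valT (iter i D q) n =
  if in_disk N n (projT1 q - i%:Z) then disk_valT q n else 0.
Proof.
elim: i => [|i IH]; first by rewrite subr0; case: ifP => // /negbT /disk_valT_out.
rewrite [LHS]disk_valT_difT IH projT1_iter_difT.
case: q IH => k y _ /=; have -> : k - i%:Z - 1 = k - i.+1%:Z by lia.
case: ifP => // h1; case: ifP => // h2; rewrite disk_valT_out //.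
by move: h1 h2; rewrite /in_disk /=; lia.
Qed.

Lemma disk_valT_shift q n :
  disk_valT (S q) n = if n == projT1 q + n1%:Z then disk_valT q n else 0.
Proof.
case: q => m y; rewrite /disk_valT /shiftT /disk_sum_shift /= disk_val_const.
by case: eqP => [->|_]; rewrite ?if_same // /in_disk; case: ifP => //; lia.
Qed.

Lemma disk_sum_contraction_term k (y : Y k) n (i : 'I_N) :
  disk_val ((at_deg k (iter (N.-1 - i) D (S (iter i D (existT _ k y))))
               : disk_sum_obj N M k) n) =
  if n == k - i%:Z + n1%:Z then disk_val (y n) else 0.
Proof.
have ltiN := ltn_ord i.
rewrite disk_valT_at_deg !(projT1_iter_difT, projT1_shiftT) -[projT1 _]/k ifT; last first.
  by apply/eqP; lia.
rewrite disk_valT_iter disk_valT_shift disk_valT_iter.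
rewrite !(projT1_iter_difT, projT1_shiftT) -[projT1 _]/k.
case: eqP => [->|_]; last by rewrite !if_same.
by rewrite !ifT // /in_disk /=; lia.
Qed.

Lemma disk_sum_contraction : @contraction R N Y disk_sum_shift.
Proof.
move=> k y; apply: functional_extensionality_dep => n; apply: (@disk_val_inj _ N _ n k).
rewrite dprod_sum_apply linear_sum /=.
under eq_bigr do rewrite disk_sum_contraction_term.
have [kn|kn] := boolP (in_disk N n k); last first.
  by rewrite disk_val_out // big1 // => i; rewrite if_same.
have i0N : (absz (k + n1%:Z - n)%R < N)%N by move: kn; rewrite /in_disk /=; lia.
rewrite -big_mkcond (eq_bigl (pred1 (Ordinal i0N))) ?big_pred1_eq // => i /=.
apply/eqP/eqP => [e|->]; first by apply: val_inj => /=; lia.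
by move: kn; rewrite /in_disk /=; lia.
Qed.

Lemma disk_sum_contractible : contractible N (disk_sum N M).
Proof.
apply/contractibleP; exists disk_sum_shift.
  exact: disk_sum_shift_linear.
exact: disk_sum_contraction.
Qed.

End DiskSumContractible.

Section DiskDecomposition.
Variables (R : pzRingType) (n1 : nat) (C : precomplex R).
Local Notation N := n1.+1.
Variable s : forall n, C n -> C (n + (N.-1)%:Z).
Hypothesis s_linear : forall n, linear (@s n).
Hypothesis C_Ncomplex : is_Ncomplex N C.
Hypothesis s_contraction : contraction s.
Local Notation D := (@difT R C).
Local Notation S := (shiftT s).

Lemma zeroT_shiftT q : zeroT q -> zeroT (S q).
Proof. by case: q => m x; rewrite /zeroT /= => ->; rewrite linear_prop0. Qed.

(* On a cycle only the term i = 0 of the homotopy formula survives. *)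
Lemma contraction_cycle j (x : C j) :
  dif C j x = 0 -> at_deg j (iter n1 D (S (existT _ j x))) = x.
Proof.
move=> dx; rewrite {2}(s_contraction x) big_ord_recl /= subn0 big1 ?addr0 // => i _.
apply/at_deg_zeroT/zeroT_iter/zeroT_shiftT.
by rewrite add0n -iterS iterSr; apply: zeroT_iter.
Qed.

Definition cycle_family (w : int -> {m : int & C m}) :=
  forall n, projT1 (w n) = n - n1%:Z /\ zeroT (D (w n)).

(* The summand w n of the disk D^N_n contributes d^(n-k) s (w n) in degree k. *)
Definition family_sum k (w : int -> {m : int & C m}) : C k :=
  \sum_(r < N) at_deg k (iter r D (S (w (k + r%:Z)))).

Lemma iter_family_sum k w m a : cycle_family w ->
  at_deg m (iter a D (existT _ k (family_sum k w))) =
  \sum_(r < N) at_deg m (iter (a + r) D (S (w (k + r%:Z)))).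
Proof.
move=> wc; rewrite /family_sum (linear_prop_sum (@iter_difT_linear _ C m a k)).
apply: eq_bigr => r _; rewrite iterD at_degK // projT1_iter_difT projT1_shiftT.
by rewrite (wc _).1; lia.
Qed.

(* Applying d^(N-1-b) kills the summands r > b (N-complex) and r < b (induction)
   and turns the summand b back into w (k + b). *)
Lemma family_sum_eq0 k w : cycle_family w -> family_sum k w = 0 ->
  forall r, (r < N)%N -> zeroT (w (k + r%:Z)).
Proof.
move=> wc w0; elim/ltn_ind => b IHb bN.
have := @iter_family_sum k w (k - (n1 - b)%N%:Z) (n1 - b) wc.
rewrite w0 at_deg_zeroT; last exact: zeroT_iter.
rewrite (bigD1 (Ordinal bN)) //= big1 ?addr0; last first.
  move=> r /eqP rb; apply: at_deg_zeroT; have [rltb|] := ltnP r b.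
    by apply/zeroT_iter/zeroT_shiftT/IHb.
  rewrite leq_eqVlt => /predU1P [br|bltr]; first by case: rb; apply: val_inj.
  apply: (Ncomplex_iter _ C_Ncomplex).
  by clear rb IHb; lia.
have [wdeg wcyc] := wc (k + b%:Z); rewrite subnK; last by rewrite -ltnS.
have -> : k - (n1 - b)%N%:Z = k + b%:Z - n1%:Z by clear -bN; lia.
rewrite -(at_degK wdeg) /= in wcyc *.
by rewrite contraction_cycle.
Qed.

Lemma family_sum_set k (w : int -> {m : int & C m}) r0 q :
  (r0 < N)%N -> zeroT (w (k + r0%:Z)) ->
  family_sum k (fun n => if n == k + r0%:Z then q else w n) =
  at_deg k (iter r0 D (S q)) + family_sum k w.
Proof.
move=> r0N wr0; rewrite /family_sum (bigD1 (Ordinal r0N)) //= eqxx.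
rewrite [in RHS](bigD1 (Ordinal r0N)) //=.
rewrite (at_deg_zeroT _ (zeroT_iter _ (zeroT_shiftT wr0))) add0r; congr (_ + _).
apply: eq_bigr => r /eqP rr0; rewrite ifN_eq //.
by apply/eqP => e; apply: rr0; apply: val_inj => /=; lia.
Qed.

(* If d^(p+1) x = 0 then z := d^p x is a cycle and d^p kills x - d^(N-1-p) s z. *)
Lemma family_sum_surj k p (x : C k) :
  (p <= N)%N -> zeroT (iter p D (existT _ k x)) ->
  exists2 w, cycle_family w &
    (forall r, (r + p <= n1)%N -> zeroT (w (k + r%:Z))) /\ family_sum k w = x.
Proof.
elim: p x => [|p IH] x pN xp.
  exists (fun n : int => existT (fun m => C m) (n - n1%:Z) 0) => [n|].
    by split=> //; apply: zeroT_difT.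
  have -> : x = 0 := xp.
  split=> //; rewrite /family_sum big1 // => r _.
  exact/at_deg_zeroT/zeroT_iter/zeroT_shiftT.
set z := dpow p x; have zcyc : dif C _ z = 0 by move: xp; rewrite iterS iter_difT_existT.
set r0 := (n1 - p)%N; set t := at_deg k (iter r0 D (S (existT _ (k - p%:Z) z))).
have xtp : zeroT (iter p D (existT _ k (x - t))).
  rewrite iter_difT_existT /zeroT /= linearB /= {2}/dpow /t at_degK; last first.
    by rewrite projT1_iter_difT /= /r0; lia.
  by rewrite -iterD (addnC p) subnK ?contraction_cycle ?subrr // -ltnS.
have [w wcyc [w0 wt]] := IH _ (ltnW pN) xtp.
exists (fun n => if n == k + r0%:Z then existT _ (k - p%:Z) z else w n).
  move=> n; case: eqP => [->|_]; last exact: wcyc.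
  by split=> //=; rewrite /r0; lia.
split=> [r rp|].
  by case: eqP => [e|_]; [exfalso; move: e; rewrite /r0; lia | apply: w0; lia].
rewrite family_sum_set ?wt.
- by rewrite -/t addrC subrK.
- by rewrite /r0 ltnS leq_subr.
- by apply: w0; rewrite subnK // -ltnS.
Qed.

Local Notation Z := (fun n : int => Z1 C (n - (N.-1)%:Z)).

Definition disk_family k (x : disk_sum_obj N Z k) n : {m : int & C m} :=
  existT _ (n - (N.-1)%:Z) (val (disk_val (x n))).

Lemma disk_family_cycle k (x : disk_sum_obj N Z k) : cycle_family (disk_family x).
Proof.
move=> n; split=> //; rewrite /zeroT /=.
by have := valP (disk_val (x n)); rewrite unfold_in /kerd => /eqP.
Qed.

Definition disk_sum_map k (x : disk_sum_obj N Z k) : C k :=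
  family_sum k (disk_family x).

Lemma disk_sum_map_linear k : linear (@disk_sum_map k).
Proof.
move=> a u v; rewrite /disk_sum_map /family_sum scaler_sumr -big_split.
apply: eq_bigr => r _; rewrite /disk_family /shiftT /= dprodD dprodZ linearP /= s_linear.
exact: iter_difT_linear.
Qed.

Lemma disk_family_dif k (x : disk_sum_obj N Z k) n :
  in_disk N n (k - 1) -> disk_family (disk_sum_dif x) n = disk_family x n.
Proof. by move=> nk; rewrite /disk_family /= disk_val_dif nk. Qed.

Lemma disk_family_out k (x : disk_sum_obj N Z k) n :
  ~~ in_disk N n k -> zeroT (disk_family x n).
Proof. by move=> nk; rewrite /zeroT /= disk_val_out. Qed.

Lemma disk_sum_map_chain k (x : disk_sum_obj N Z k) :
  dif C k (disk_sum_map x) = disk_sum_map (disk_sum_dif x).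
Proof.
rewrite /disk_sum_map /family_sum linear_sum.
under eq_bigr do rewrite dif_at_deg.
rewrite big_ord_recr /= at_deg_zeroT ?addr0; last first.
  by rewrite -iterS; apply: (Ncomplex_iter _ C_Ncomplex).
rewrite [RHS]big_ord_recl /= [at_deg _ (S _)]at_deg_zeroT ?add0r; last first.
  rewrite addr0 disk_family_dif; last by rewrite /in_disk /=; lia.
  by apply/zeroT_shiftT/disk_family_out; rewrite /in_disk /=; lia.
apply: eq_bigr => i _; rewrite /bump leq0n add1n disk_family_dif; last first.
  by rewrite /in_disk /=; have := ltn_ord i; lia.
by have -> : k - 1 + i.+1%:Z = k + i%:Z by lia.
Qed.

Definition family_disks k (w : int -> {m : int & C m}) : disk_sum_obj N Z k :=
  fun n _ => insubd (0 : Z1 C (n - (N.-1)%:Z)) (at_deg (n - (N.-1)%:Z) (w n)).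

Lemma disk_sum_map_family_disks k w :
  cycle_family w -> disk_sum_map (@family_disks k w) = family_sum k w.
Proof.
move=> wc; apply: eq_bigr => r _; congr (at_deg _ (iter _ _ (S _))).
have nk : in_disk N (k + r%:Z) k by rewrite /in_disk /=; have := ltn_ord r; lia.
have [wdeg wcyc] := wc (k + r%:Z); rewrite -(at_degK wdeg) in wcyc.
rewrite /disk_family (disk_valE _ nk) /family_disks insubdK ?at_degK //.
by rewrite unfold_in /kerd; apply/eqP.
Qed.

Lemma disk_sum_map_eq0 k (x : disk_sum_obj N Z k) : disk_sum_map x = 0 -> x = 0.
Proof.
move=> x0; have xz := family_sum_eq0 (disk_family_cycle x) x0.
apply: functional_extensionality_dep => n; apply: (@disk_val_inj _ N _ n k).
rewrite linear0; have [nk|nk] := boolP (in_disk N n k); last by rewrite disk_val_out.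
have [r rN ->] : exists2 r : nat, (r < N)%N & n = k + r%:Z.
  by exists (absz (n - k)%R); move: nk; rewrite /in_disk /=; lia.
by apply: val_inj; apply: xz.
Qed.

Lemma disk_sum_map_surj k (x : C k) : exists y, disk_sum_map y = x.
Proof.
have [w wc [_ wx]] :=
  family_sum_surj (leqnn N) (Ncomplex_iter (existT _ k x) C_Ncomplex (leqnn N)).
by exists (@family_disks k w); rewrite disk_sum_map_family_disks.
Qed.

Lemma cx_iso_disk_sum_cycles : cx_iso C (disk_sum N Z).
Proof.
apply: (@cx_iso_of_bijective R C (disk_sum N Z) (fun k => @disk_sum_map k)).
- by split; [exact: disk_sum_map_linear | exact: disk_sum_map_chain].
- exact: disk_sum_map_eq0.
- exact: disk_sum_map_surj.
Qed.

End DiskDecomposition.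

Theorem theorem3p3 (R : pzRingType) (N : nat) (C : precomplex R) :
  (2 <= N)%N -> is_Ncomplex N C ->
  (contractible N C <->
     exists M : int -> lmodType R, cx_iso C (disk_sum N M)) /\
  (contractible N C ->
     cx_iso C (disk_sum N (fun n : int => Z1 C (n - (N.-1)%:Z)))).
Proof.
case: N => [//|n1] _ CN.
have cycles_iso : contractible n1.+1 C ->
    cx_iso C (disk_sum n1.+1 (fun n : int => Z1 C (n - (n1.+1.-1)%:Z))).
  by case/contractibleP => s s_linear s_contraction; apply: cx_iso_disk_sum_cycles.
split=> //; split=> [/cycles_iso|[M CM]].
  by exists (fun n : int => Z1 C (n - n1%:Z)).
exact: contractible_iso CM (disk_sum_contractible n1 M).
Qed.
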